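(* Let $G$ be a connected graph of order $n$ and size $m$, with vertex degrees $d_1, \ldots, d_n$ and normalized Laplacian matrix $\mathcal{L}$. Then $G$ has $k$ distinct $\mathcal{L}$-eigenvalues, where $2 \le k \le n$, if and only if there are $k-1$ distinct non-zero real numbers $\mu_1, \ldots, \mu_{k-1}$ such that (i) $\mathcal{L} - \mu_i I$ is a singular matrix for every $1 \le i \le k-1$; and (ii) $\prod_{i=1}^{k-1}(\mathcal{L} - \mu_i I) = (-1)^{k-1}\frac{\prod_{i=1}^{k-1}\mu_i}{2m}\,\alpha\alpha^T$, where $\alpha^T = (\sqrt{d_1}, \sqrt{d_2}, \ldots, \sqrt{d_n})$. Moreover, in this case $\mu_1, \ldots, \mu_{k-1}, 0$ are exactly the $k$ distinct $\mathcal{L}$-eigenvalues of $G$.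
   Context: For a simple undirected graph with adjacency matrix $A$ and diagonal degree matrix $D$, the Laplacian is $L = D - A$ and the normalized Laplacian is $\mathcal{L} = D^{-1/2} L D^{-1/2}$; $\mathcal{L}$-eigenvalues are the eigenvalues of $\mathcal{L}$. $I$ is the identity matrix. *)

From mathcomp Require Import all_boot all_order all_algebra.
Set Implicit Arguments. Unset Strict Implicit. Unset Printing Implicit Defensive.
Import Order.TTheory GRing.Theory Num.Theory.
Local Open Scope ring_scope.

Definition simple_graph (n : nat) (adj : rel 'I_n) : Prop :=
  symmetric adj /\ irreflexive adj.

Definition connected_graph (n : nat) (adj : rel 'I_n) : Prop :=
  forall x y : 'I_n, connect adj x y.

Definition deg (n : nat) (adj : rel 'I_n) (i : 'I_n) : nat :=
  #|[set j | adj i j]|.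

Definition gsize (n : nat) (adj : rel 'I_n) : nat :=
  #|[set e : 'I_n * 'I_n | adj e.1 e.2 && (e.1 < e.2)%N]|.

Definition adjmx (R : pzRingType) (n : nat) (adj : rel 'I_n) : 'M[R]_n :=
  \matrix_(i, j) (adj i j)%:R.

Definition degmx (R : pzRingType) (n : nat) (adj : rel 'I_n) : 'M[R]_n :=
  \matrix_(i, j) ((i == j)%:R * (deg adj i)%:R).

Definition laplacian (R : pzRingType) (n : nat) (adj : rel 'I_n) : 'M[R]_n :=
  degmx R adj - adjmx R adj.

Definition degmx_isqrt (R : rcfType) (n : nat) (adj : rel 'I_n) : 'M[R]_n :=
  \matrix_(i, j) ((i == j)%:R * (Num.sqrt (deg adj i)%:R)^-1).

Definition nlaplacian (R : rcfType) (n : nat) (adj : rel 'I_n) : 'M[R]_n :=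
  degmx_isqrt R adj *m laplacian R adj *m degmx_isqrt R adj.

Definition sqrtdeg_col (R : rcfType) (n : nat) (adj : rel 'I_n) : 'cV[R]_n :=
  \col_i Num.sqrt (deg adj i)%:R.

Definition n_distinct_eigenvalues (F : fieldType) (n : nat) (A : 'M[F]_n)
  (k : nat) : Prop :=
  exists s : seq F, [/\ uniq s, size s = k & forall a, eigenvalue A a <-> a \in s].

From mathcomp Require Import all_boot all_order all_algebra.
From mathcomp Require Import complex ring.
Import Order.TTheory GRing.Theory Num.Theory.
Local Open Scope ring_scope.
Set Implicit Arguments. Unset Strict Implicit. Unset Printing Implicit Defensive.

(* The normalized Laplacian L is symmetric, L alpha = 0, and since G is
   connected ker L is spanned by alpha: for v L = 0 the function
   i |-> v_i / sqrt d_i is harmonic, hence constant.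
   If the eigenvalues of L are 0, mu_1, ..., mu_(k-1), the spectral theorem
   gives L * prod (L - mu_i) = 0, so all rows and columns of the product lie in
   ker L and the product is t alpha alpha^T; multiplying on the left by
   alpha^T, a left eigenvector for 0, and using alpha^T alpha = 2m yields
   t = prod (-mu_i) / 2m.  Conversely, if the product has that shape, an
   eigenvector v for a nonzero eigenvalue a satisfies v alpha = 0, so
   prod (a - mu_i) v = v prod (L - mu_i) = 0 and a is one of the mu_i. *)

Lemma eigenvalue_unitmx (F : fieldType) n (A : 'M[F]_n) a :
  eigenvalue A a = (A - a%:M \notin unitmx).
Proof. by rewrite /eigenvalue /eigenspace kermx_eq0 row_free_unit. Qed.

Lemma eigenvector_prod_sub (F : fieldType) n (A : 'M[F]_n) (v : 'rV_n) a
    r (c : 'I_r -> F) :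
  v *m A = a *: v ->
  v *m \prod_(i < r) (A - (c i)%:M) = (\prod_(i < r) (a - c i)) *: v.
Proof.
move=> vA; elim: r c => [|r IH] c; first by rewrite !big_ord0 mulmx1 scale1r.
rewrite !big_ord_recr /= -mulmxE mulmxA IH -scalemxAl mulmxBr vA mul_mx_scalar.
by rewrite -scalerBl scalerA.
Qed.

Lemma prod_sub_comm (R : comPzRingType) n (A : 'M[R]_n) r (c : 'I_r -> R) :
  A *m \prod_(i < r) (A - (c i)%:M) = \prod_(i < r) (A - (c i)%:M) *m A.
Proof.
rewrite !mulmxE; apply: commr_prod => i _.
by rewrite /GRing.comm mulrBl mulrBr -!mulmxE scalar_mxC.
Qed.

Lemma prod_sub_conj_diag (F : fieldType) n (M : 'M[F]_n) (d : 'rV_n)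
    r (c : 'I_r -> F) :
  M \in unitmx ->
  \prod_(i < r) (invmx M *m diag_mx d *m M - (c i)%:M) =
  invmx M *m diag_mx (\row_j \prod_(i < r) (d 0 j - c i)) *m M.
Proof.
move=> Mu; elim: r c => [|r IH] c.
  rewrite big_ord0 (_ : \row_j _ = const_mx 1); last first.
    by apply/rowP => j; rewrite !mxE big_ord0.
  by rewrite diag_const_mx mulmx1 mulVmx.
have shift : invmx M *m diag_mx d *m M - (c ord_max)%:M =
             invmx M *m diag_mx (d - const_mx (c ord_max)) *m M.
  rewrite linearB /= diag_const_mx mulmxBr mulmxBl mul_mx_scalar -scalemxAl.
  by rewrite mulVmx // scalemx1.
rewrite big_ord_recr /= IH shift -mulmxE !mulmxA mulmxK //.
rewrite -(mulmxA (invmx M)) mulmx_diag.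
by congr (_ *m diag_mx _ *m _); apply/rowP => j; rewrite !mxE big_ord_recr.
Qed.

Lemma map_mx_prod_sub (aF rF : fieldType) (f : {rmorphism aF -> rF}) n
    (A : 'M[aF]_n) r (c : 'I_r -> aF) :
  map_mx f (\prod_(i < r) (A - (c i)%:M)) =
  \prod_(i < r) (map_mx f A - (f (c i))%:M).
Proof.
elim: r c => [|r IH] c; first by rewrite !big_ord0 map_mx1.
by rewrite !big_ord_recr /= -!mulmxE map_mxM IH map_mxB map_scalar_mx.
Qed.

Lemma sym_spectral_complex (R : rcfType) n (A : 'M[R]_n) : A^T = A ->
  exists M : 'M[R[i]]_n, exists d : 'rV[R[i]]_n,
   [/\ M \in unitmx, map_mx (real_complex R) A = invmx M *m diag_mx d *m M &
       forall j, exists2 r, d 0 j = real_complex R r & eigenvalue A r].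
Proof.
move=> AT; set Ac := map_mx (real_complex R) A.
have Aherm : Ac \is hermsymmx.
  apply: realsym_hermsym; last first.
    by apply/mxOverP => i j; rewrite mxE /= complex_real.
  by apply/is_hermitianmxP; rewrite expr0 scale1r map_mx_id // /Ac map_trmx AT.
have Adec := orthomx_spectralP (hermitian_normalmx Aherm).
have Mu := spectral_unit Ac.
exists (spectralmx Ac), (spectral_diag Ac); split => // j.
have /mxOverP /(_ 0 j) := hermitian_spectral_diag_real Aherm.
case E: (spectral_diag Ac 0 j) => [a b]; rewrite complex_real => /eqP b0.
exists a; first by rewrite b0.
rewrite -(eigenvalue_map (real_complex R)) -/Ac; apply/eigenvalueP.
exists (row j (spectralmx Ac)).
  rewrite -row_mul [X in _ *m X]Adec !mulmxA mulmxV // mul1mx mul_diag_mx.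
  by apply/rowP => l; rewrite !mxE E b0.
apply: contraTneq Mu => rj0; rewrite -row_free_unit; apply/row_freePn.
by exists j; rewrite rj0 sub0mx.
Qed.

Lemma sym_mul_prod_sub_eigen_eq0 (R : rcfType) n (A : 'M[R]_n)
    r (c : 'I_r -> R) :
  A^T = A -> (forall a, eigenvalue A a -> a = 0 \/ exists i, a = c i) ->
  A *m \prod_(i < r) (A - (c i)%:M) = 0.
Proof.
move=> AT Aev; have [M [d [Mu Adec dev]]] := sym_spectral_complex AT.
pose dprod := \row_j \prod_(i < r) (d 0 j - real_complex R (c i)).
have dprod0 : diag_mx d *m diag_mx dprod = 0.
  rewrite mulmx_diag -(linear0 (@diag_mx _ n)); congr diag_mx; apply/rowP => j.
  rewrite !mxE; have [x -> /Aev [->|[i ->]]] := dev j; first by rewrite mul0r.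
  by rewrite (bigD1 i) //= subrr mul0r mulr0.
apply: (@map_mx_inj _ _ (real_complex R)).
rewrite map_mxM map_mx_prod_sub Adec prod_sub_conj_diag // map_mx0.
by rewrite !mulmxA mulmxK // -(mulmxA (invmx M)) dprod0 mulmx0 mul0mx.
Qed.

Lemma outer_of_rows_cols (F : fieldType) n (P : 'M[F]_n) (a : 'cV_n) i0 :
  a i0 0 != 0 ->
  (forall i, exists c, row i P = c *: a^T) ->
  (forall j, exists e, col j P = e *: a) ->
  exists t, P = t *: (a *m a^T).
Proof.
move=> ai0 rowsP colsP; have [e Pi0] := colsP i0.
exists (e / a i0 0); apply/matrixP => i j.
have [c Pi] := rowsP i.
have Pij l : P i l = c * a l 0 by have /rowP /(_ l) := Pi; rewrite !mxE.
have : P i i0 = e * a i 0 by have /colP /(_ i) := Pi0; rewrite !mxE.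
rewrite Pij => /(canRL (mulfK ai0)) c_def.
by rewrite !mxE big_ord1 !mxE Pij c_def; ring.
Qed.

Lemma eigenvalue_prod_sub_outer (F : fieldType) n (A : 'M[F]_n) (a : 'cV_n)
    r (c : 'I_r -> F) s :
  A *m a = 0 -> \prod_(i < r) (A - (c i)%:M) = s *: (a *m a^T) ->
  forall x, eigenvalue A x -> x = 0 \/ exists i, x = c i.
Proof.
move=> Aa Pouter x /eigenvalueP [v vA v0].
have [->|x0] := eqVneq x 0; [by left | right].
have va : v *m a = 0.
  have : x *: (v *m a) = 0 by rewrite scalemxAl -vA -mulmxA Aa mulmx0.
  by move/eqP; rewrite scaler_eq0 (negPf x0) => /eqP.
have := eigenvector_prod_sub c vA; rewrite Pouter -scalemxAr mulmxA va mul0mx.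
rewrite scaler0 => /esym/eqP; rewrite scaler_eq0 (negPf v0) orbF.
rewrite prodf_seq_eq0 => /hasP [i _ /=]; rewrite subr_eq0 => /eqP ->.
by exists i.
Qed.

Lemma n_distinct_eigenvaluesS0 (F : fieldType) n (A : 'M[F]_n) k :
  eigenvalue A 0 ->
  n_distinct_eigenvalues A k.+1 <->
  exists mu : 'I_k -> F, [/\ injective mu, forall i, mu i != 0 &
    forall a, eigenvalue A a <-> a = 0 \/ exists i, a = mu i].
Proof.
move=> A0; split.
  case=> s [us ss sA]; set t := rem 0 s.
  have tE x : (x \in t) = (x != 0) && (x \in s) by rewrite mem_rem_uniq.
  have st : size t = k by rewrite size_rem ?ss //; apply/sA.
  pose mu (i : 'I_k) := nth 0 t i.
  have mut i : mu i \in t by rewrite mem_nth // st.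
  exists mu; split.
  - by move=> i j /eqP; rewrite nth_uniq ?st ?rem_uniq // => /eqP /val_inj.
  - by move=> i; have := mut i; rewrite tE => /andP [].
  move=> a; rewrite sA; split => [a_in_s|[->|[i ->]]]; last 2 first.
  - by apply/sA.
  - by have := mut i; rewrite tE => /andP [].
  have [->|a0] := eqVneq a 0; [by left | right].
  have ia : (index a t < k)%N by rewrite -st index_mem tE a0.
  by exists (Ordinal ia); rewrite /mu nth_index // tE a0.
case=> mu [mu_inj mu0 muA]; exists (0 :: [seq mu i | i <- enum 'I_k]); split.
- rewrite /= map_inj_uniq ?enum_uniq ?andbT //.
  by apply/mapP => -[i _ /esym/eqP]; apply/negP.
- by rewrite /= size_map size_enum_ord.
move=> a; rewrite muA in_cons; split.
  case=> [->|[i ->]]; first by rewrite eqxx.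
  by rewrite map_f ?mem_enum ?orbT.
by case/orP => [/eqP ->|/mapP [i _ ->]]; [left | right; exists i].
Qed.

Section Degrees.

Variables (n : nat) (adj : rel 'I_n).
Hypotheses (adj_sym : symmetric adj) (adj_irr : irreflexive adj)
  (adj_conn : connected_graph adj).

Lemma degE i : deg adj i = (\sum_j adj i j)%N.
Proof.
by rewrite /deg -sum1dep_card big_mkcond /=; apply: eq_bigr => j _; case: adj.
Qed.

Lemma natr_deg (R : pzSemiRingType) i : (deg adj i)%:R = \sum_j (adj j i)%:R :> R.
Proof. by rewrite degE natr_sum; apply: eq_bigr => j _; rewrite adj_sym. Qed.

Lemma deg_gt0 i : (1 < n)%N -> (0 < deg adj i)%N.
Proof.
move=> n_gt1; have [j ji] : exists j : 'I_n, j != i.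
  have [<-|ne] := eqVneq (Ordinal (ltnW n_gt1)) i; last by exists (Ordinal (ltnW n_gt1)).
  by exists (Ordinal n_gt1); apply/eqP => /(congr1 val).
have /connectP [[|x p] /= pth lst] := adj_conn i j; first by rewrite lst eqxx in ji.
by rewrite /deg card_gt0; apply/set0Pn; exists x; rewrite inE; case/andP: pth.
Qed.

Lemma handshake : (\sum_i deg adj i = 2 * gsize adj)%N.
Proof.
rewrite /gsize -sum1dep_card.
under eq_bigr => i _ do rewrite degE.
rewrite pair_bigA /= mul2n -addnn.
have split_pair (e : 'I_n * 'I_n) : adj e.1 e.2 =
    ((adj e.1 e.2 && (e.1 < e.2)) + (adj e.1 e.2 && (e.2 < e.1)))%N :> nat.
  case: e => a b /=; case: (ltngtP a b) => [_|_|/val_inj ->] /=; rewrite ?adj_irr //.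
  - by case: adj.
  - by case: adj.
rewrite (eq_bigr _ (fun e _ => split_pair e)) big_split /=.
rewrite [X in (_ + X)%N](reindex (fun e : 'I_n * 'I_n => (e.2, e.1))) /=; last first.
  by exists (fun e : 'I_n * 'I_n => (e.2, e.1)) => -[].
under [X in (_ + X)%N]eq_bigr => e _ do rewrite adj_sym.
by rewrite [in RHS]big_mkcond.
Qed.

(* Maximum principle: at a vertex where [w] is maximal, the harmonic equation
   forces every neighbour to take the same value; connectedness propagates it. *)
Lemma harmonic_const (R : realDomainType) (w : 'I_n -> R) :
  (forall j, (deg adj j)%:R * w j = \sum_i (adj i j)%:R * w i) ->
  forall x y, w x = w y.
Proof.
move=> harm x.
have [m _ wm_max] := @arg_maxP _ _ _ x predT w isT.
have nbr_max j i : w j = w m -> adj i j -> w i = w m.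
  move=> wj ij; have : \sum_l (adj l j)%:R * (w m - w l) = 0.
    under eq_bigr => l _ do rewrite mulrBr.
    by rewrite sumrB -mulr_suml -natr_deg -harm wj subrr.
  have terms_ge0 l : true -> 0 <= (adj l j)%:R * (w m - w l).
    by move=> _; rewrite mulr_ge0 ?ler0n // subr_ge0; apply: wm_max.
  move/psumr_eq0P => /(_ terms_ge0 i isT)/eqP.
  by rewrite ij mul1r subr_eq0 => /eqP.
have along u p : w u = w m -> path adj u p -> w (last u p) = w m.
  elim: p u => [|z p IH] u wu //= /andP [uz pz].
  by apply: IH pz; apply: nbr_max wu _; rewrite adj_sym.
have w_const y : w y = w m.
  by have /connectP [p pth ->] := adj_conn m y; apply: along.
by move=> y; rewrite !w_const.
Qed.

End Degrees.

Section NormalizedLaplacian.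

Variables (R : rcfType) (n : nat) (adj : rel 'I_n).
Hypotheses (adj_sym : symmetric adj) (adj_irr : irreflexive adj)
  (adj_conn : connected_graph adj) (n_gt1 : (1 < n)%N).

Local Notation L := (nlaplacian R adj).
Local Notation alpha := (sqrtdeg_col R adj).
Local Notation sqd i := (Num.sqrt (deg adj i)%:R : R).

Lemma sqrtdeg_neq0 i : sqd i != 0.
Proof. by rewrite gt_eqF // sqrtr_gt0 ltr0n deg_gt0. Qed.

Lemma nlaplacianE i j :
  L i j = ((i == j)%:R * (deg adj i)%:R - (adj i j)%:R) / (sqd i * sqd j).
Proof.
have isqrtE : degmx_isqrt R adj = diag_mx (\row_i (sqd i)^-1).
  by apply/matrixP => a b; rewrite !mxE mulr_natl.
rewrite /nlaplacian isqrtE mul_diag_mx mul_mx_diag !mxE invfM mulrA.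
by rewrite [_ * (sqd i)^-1]mulrC.
Qed.

Lemma nlaplacian_sym : L^T = L.
Proof.
apply/matrixP => i j; rewrite mxE !nlaplacianE adj_sym [sqd j * _]mulrC eq_sym.
by case: eqP => [->|]; rewrite ?mul0r.
Qed.

Lemma mul_nlaplacian_col (v : 'rV[R]_n) j :
  (v *m L) 0 j * sqd j =
  (deg adj j)%:R * (v 0 j / sqd j) - \sum_i (adj i j)%:R * (v 0 i / sqd i).
Proof.
have term i : v 0 i * L i j * sqd j =
    (i == j)%:R * (deg adj i)%:R * (v 0 i / sqd i) - (adj i j)%:R * (v 0 i / sqd i).
  by rewrite nlaplacianE; field; rewrite !sqrtdeg_neq0.
rewrite !mxE mulr_suml; under eq_bigr => i _ do rewrite term.
rewrite sumrB (bigD1 j) //= eqxx mul1r big1 ?addr0 // => i /negPf ->.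
by rewrite !mul0r.
Qed.

Lemma sqrtdeg_nlaplacian : alpha^T *m L = 0.
Proof.
apply/rowP => j; apply: (mulIf (sqrtdeg_neq0 j)).
rewrite mul_nlaplacian_col [in RHS]mxE mul0r.
rewrite (eq_bigr (fun i => (adj i j)%:R)) => [|i _]; last first.
  by rewrite !mxE divff ?sqrtdeg_neq0 ?mulr1.
by rewrite !mxE divff ?sqrtdeg_neq0 // mulr1 -natr_deg // subrr.
Qed.

Lemma nlaplacian_sqrtdeg : L *m alpha = 0.
Proof. by rewrite -[LHS]trmxK trmx_mul nlaplacian_sym sqrtdeg_nlaplacian trmx0. Qed.

Lemma nlaplacian_left_ker (v : 'rV[R]_n) :
  v *m L = 0 -> exists c, v = c *: alpha^T.
Proof.
move=> vL; pose w i := v 0 i / sqd i.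
have harm j : (deg adj j)%:R * w j = \sum_i (adj i j)%:R * w i.
  by apply/eqP; rewrite -subr_eq0 -mul_nlaplacian_col vL mxE mul0r.
have i0 : 'I_n := Ordinal (ltnW n_gt1).
exists (w i0); apply/rowP => i.
by rewrite !mxE (harmonic_const adj_sym adj_conn harm i0 i) divfK ?sqrtdeg_neq0.
Qed.

Lemma sqrtdeg_dot : alpha^T *m alpha = (2 * gsize adj)%:R%:M.
Proof.
apply/matrixP => i j; rewrite !ord1 !mxE -handshake // natr_sum.
by apply: eq_bigr => l _; rewrite !mxE -expr2 sqr_sqrtr ?ler0n.
Qed.

Lemma double_gsize_neq0 : (2 * gsize adj)%:R != 0 :> R.
Proof.
rewrite pnatr_eq0 -handshake // -lt0n (bigD1 (Ordinal n_gt1)) //=.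
by rewrite ltn_addr // deg_gt0.
Qed.

Lemma prod_sub_nlaplacian r (mu : 'I_r -> R) :
  (forall a, eigenvalue L a -> a = 0 \/ exists i, a = mu i) ->
  \prod_(i < r) (L - (mu i)%:M) =
    ((-1) ^+ r * (\prod_(i < r) mu i) / (2 * gsize adj)%:R) *: (alpha *m alpha^T).
Proof.
move=> Lev; set P := \prod_(i < r) _.
have LP : L *m P = 0 := sym_mul_prod_sub_eigen_eq0 nlaplacian_sym Lev.
have PL : P *m L = 0 by rewrite -prod_sub_comm.
have i0 : 'I_n := Ordinal (ltnW n_gt1).
have [t Pt] : exists t, P = t *: (alpha *m alpha^T).
  apply: (@outer_of_rows_cols _ _ _ _ i0); first by rewrite mxE sqrtdeg_neq0.
    by move=> i; apply: nlaplacian_left_ker; rewrite -row_mul PL row0.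
  move=> j; have [e colT] : exists e, (col j P)^T = e *: alpha^T.
    apply: nlaplacian_left_ker.
    by rewrite tr_col -row_mul -[X in _ *m X]nlaplacian_sym -trmx_mul LP trmx0 row0.
  by exists e; rewrite -[col j P]trmxK colT linearZ /= trmxK.
have : alpha^T *m P = (\prod_(i < r) (0 - mu i)) *: alpha^T.
  by apply: eigenvector_prod_sub; rewrite sqrtdeg_nlaplacian scale0r.
rewrite Pt -scalemxAr mulmxA sqrtdeg_dot mul_scalar_mx scalerA.
move=> /rowP /(_ i0); rewrite !mxE => /(mulIf (sqrtdeg_neq0 i0)) t_size.
congr (_ *: _); apply: (mulIf double_gsize_neq0).
rewrite t_size divfK ?double_gsize_neq0 // -[X in (-1) ^+ X](card_ord r) -prodrN.
by apply: eq_bigr => i _; rewrite sub0r.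
Qed.

End NormalizedLaplacian.

Theorem theorem4p5 (R : rcfType) (n : nat) (adj : rel 'I_n) (k : nat) :
  simple_graph adj -> connected_graph adj -> (2 <= k <= n)%N ->
  let L := nlaplacian R adj in
  let alpha := sqrtdeg_col R adj in
  let cond (mu : 'I_k.-1 -> R) :=
    [/\ injective mu, (forall i, mu i != 0),
        (forall i, L - (mu i)%:M \notin unitmx) &
        \prod_(i < k.-1) (L - (mu i)%:M) =
          ((-1) ^+ k.-1 * (\prod_(i < k.-1) mu i) / (2 * gsize adj)%:R)
            *: (alpha *m alpha^T)] in
  (n_distinct_eigenvalues L k <-> exists mu, cond mu) /\
  (forall mu, cond mu -> forall a, eigenvalue L a <-> (a = 0 \/ exists i, a = mu i)).
Proof.
move=> [adj_sym adj_irr] adj_conn /andP [k_ge2 k_le_n] L alpha cond.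
have n_gt1 : (1 < n)%N := leq_trans k_ge2 k_le_n.
have L0 : eigenvalue L 0.
  apply/eigenvalueP; exists alpha^T.
    by rewrite sqrtdeg_nlaplacian // (scale0r (alpha^T : 'rV[R]_n)).
  apply/eqP => /rowP /(_ (Ordinal n_gt1)); rewrite !mxE; apply/eqP.
  exact: sqrtdeg_neq0.
have cond_eigenvalues mu : cond mu ->
    forall a, eigenvalue L a <-> (a = 0 \/ exists i, a = mu i).
  case=> _ _ mu_sing mu_prod a; split.
    have L_alpha := nlaplacian_sqrtdeg R adj_sym adj_conn n_gt1.
    exact: eigenvalue_prod_sub_outer L_alpha mu_prod a.
  by case=> [->|[i ->]] //; rewrite eigenvalue_unitmx.
split=> //; rewrite -[k in n_distinct_eigenvalues _ k](prednK (ltnW k_ge2)).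
apply: iff_trans (n_distinct_eigenvaluesS0 _ L0) _; split.
  case=> mu [mu_inj mu_neq0 muL]; exists mu; split=> // [i|].
    by rewrite -eigenvalue_unitmx; apply/muL; right; exists i.
  by apply: prod_sub_nlaplacian => // a /muL.
case=> mu mu_cond; exists mu; case: (mu_cond) => mu_inj mu_neq0 _ _.
by split=> //; apply: cond_eigenvalues.
Qed.
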